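(* Let $n\ge 2$ and $1\le r\le n-1$ be integers. For every integer $m\ge 1$ define on $[-1,1]$ \[ \mathcal{T}_m(x)=\frac{\sqrt{1-x^2}\,T_m'(x)}{m^2}, \] where $T_m(x)=\cos(m\cos^{-1}x)$ is the Chebyshev polynomial of the first kind of degree $m$. For a sign vector $\varepsilon=(\varepsilon_1,\dots,\varepsilon_r)\in\{-1,+1\}^r$ put $m_0=n$, $m_i=m_{i-1}+\varepsilon_i$ for $1\le i\le r$, and \[ \beta_{n,r}(\varepsilon)=\prod_{i=1}^{r}2m_{i-1}. \] Enumerate the $2^r$ sign vectors as $\varepsilon^{(1)},\dots,\varepsilon^{(2^r)}$ in lexicographic order with $-1<+1$ (with $\varepsilon_1$ the most significant entry), and write $\beta^j_{n,r}=\beta_{n,r}(\varepsilon^{(j)})$. Then for all $x\in(-1,1)$, \[ \mathcal{T}_n(x)=\frac{d^r}{dx^r}\left(\sum_{j=1}^{2^r}\Big(\prod_{i=1}^r\varepsilon^{(j)}_i\Big)\frac{\mathcal{T}_{\,n+\varepsilon^{(j)}_1+\cdots+\varepsilon^{(j)}_r}(x)}{\beta^j_{n,r}}\right), \] i.e. $\mathcal{T}_n=\Big(\frac{(-1)^r\mathcal{T}_{n-r}}{\beta^1_{n,r}}+\frac{(-1)^{r-1}\mathcal{T}_{n-r+2}}{\beta^2_{n,r}}+\cdots-\frac{\mathcal{T}_{n+r-2}}{\beta^{2^r-1}_{n,r}}+\frac{\mathcal{T}_{n+r}}{\beta^{2^r}_{n,r}}\Big)^{(r)}$. Moreover \[ \beta^1_{n,r}=\beta^2_{n,r}=\prod_{i=1}^{r}(2n-2i+2),\qquad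 \beta^{2^r-1}_{n,r}=\beta^{2^r}_{n,r}=\prod_{i=1}^{r}(2n+2i-2), \] and for every $1\le j\le 2^{r-1}$, \[ \beta^1_{n,r}=\beta^2_{n,r}\le \beta^{2j-1}_{n,r}=\beta^{2j}_{n,r}\le\beta^{2^r-1}_{n,r}=\beta^{2^r}_{n,r}. \]
   Context: $T_m(x)=\cos(m\cos^{-1}x)$ denotes the Chebyshev polynomial of the first kind; $\mathcal{T}_m$ is the scaled quantity defined in the claim. The superscript $(r)$ denotes the $r$-th derivative with respect to $x$. *)

From Stdlib Require Import Reals Lra Lia ZArith List.
From Coquelicot Require Import Coquelicot.
Open Scope R_scope.

Definition chebT (m : nat) (x : R) : R := cos (INR m * acos x).

Definition calT (m : nat) (x : R) : R :=
  sqrt (1 - x ^ 2) * Derive (chebT m) x / (INR m) ^ 2.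

Definition sumR (a len : nat) (f : nat -> R) : R :=
  fold_right Rplus 0 (map f (seq a len)).
Definition prodR (a len : nat) (f : nat -> R) : R :=
  fold_right Rmult 1 (map f (seq a len)).

(* The j-th sign vector (1 <= j <= 2^r) in lexicographic order with -1 < +1,
   eps_1 most significant: its i-th entry (1 <= i <= r) is +1 iff bit (r-i)
   of the binary expansion of j-1 is set. *)
Definition eps (r j i : nat) : Z :=
  if Nat.testbit (j - 1) (r - i) then 1%Z else (-1)%Z.

Definition mseq (n r j i : nat) : Z :=
  (Z.of_nat n + fold_right Z.add 0%Z (map (eps r j) (seq 1 i)))%Z.

Definition beta (n r j : nat) : R :=
  prodR 1 r (fun i => 2 * IZR (mseq n r j (i - 1))).

Definition sgnprod (r j : nat) : R :=
  prodR 1 r (fun i => IZR (eps r j i)).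

Definition betaSum (n r : nat) (x : R) : R :=
  sumR 1 (2 ^ r) (fun j =>
    sgnprod r j * calT (Z.to_nat (mseq n r j r)) x / beta n r j).

(* With θ = arccos x one has calT_m(x) = sin(mθ)/m and d/dx [sin(mθ)/m] = -cos(mθ)/sin θ,
   so the sum-to-product formula cos((M-1)θ) - cos((M+1)θ) = 2 sin(Mθ) sin θ gives
   calT_M = ((calT_(M+1) - calT_(M-1)) / (2M))'  for M >= 2.
   Applying this r times, each index splits into M+1 (sign +) and M-1 (sign -), so the
   terms are indexed by sign vectors and carry the product of the factors 2M met on the
   way, which is beta.  Along a path m_(i-1) lies between n-i+1 and n+i-1, and beta does
   not see the last sign, whence the comparisons between the betas. *)
From Stdlib Require Import Reals Lra Lia ZArith List.
From Coquelicot Require Import Coquelicot.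
Open Scope R_scope.

Lemma sumR_cons a k f : sumR a (S k) f = f a + sumR (S a) k f.
Proof. reflexivity. Qed.

Lemma prodR_cons a k f : prodR a (S k) f = f a * prodR (S a) k f.
Proof. reflexivity. Qed.

Lemma sumR_ext a k f g :
  (forall i, (a <= i < a + k)%nat -> f i = g i) -> sumR a k f = sumR a k g.
Proof.
  revert a; induction k as [|k IH]; intros a Hfg; [reflexivity|].
  rewrite !sumR_cons, (Hfg a) by lia.
  f_equal; apply IH; intros; apply Hfg; lia.
Qed.

Lemma prodR_ext a k f g :
  (forall i, (a <= i < a + k)%nat -> f i = g i) -> prodR a k f = prodR a k g.
Proof.
  revert a; induction k as [|k IH]; intros a Hfg; [reflexivity|].
  rewrite !prodR_cons, (Hfg a) by lia.
  f_equal; apply IH; intros; apply Hfg; lia.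
Qed.

Lemma prodR_snoc a k f : prodR a (S k) f = prodR a k f * f (a + k)%nat.
Proof.
  revert a; induction k as [|k IH]; intros a.
  - unfold prodR; simpl; rewrite Nat.add_0_r; ring.
  - rewrite prodR_cons, IH, prodR_cons.
    replace (S a + k)%nat with (a + S k)%nat by lia; ring.
Qed.

Lemma prodR_nonneg a k f :
  (forall i, (a <= i < a + k)%nat -> 0 <= f i) -> 0 <= prodR a k f.
Proof.
  revert a; induction k as [|k IH]; intros a Hf; [unfold prodR; simpl; lra|].
  rewrite prodR_cons; apply Rmult_le_pos; [apply Hf; lia|].
  apply IH; intros; apply Hf; lia.
Qed.

Lemma prodR_le a k f g :
  (forall i, (a <= i < a + k)%nat -> 0 <= f i <= g i) -> prodR a k f <= prodR a k g.
Proof.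
  revert a; induction k as [|k IH]; intros a Hfg; [unfold prodR; simpl; lra|].
  rewrite !prodR_cons; apply Rmult_le_compat.
  - apply Hfg; lia.
  - apply prodR_nonneg; intros; apply Hfg; lia.
  - apply Hfg; lia.
  - apply IH; intros; apply Hfg; lia.
Qed.

Lemma sumR_pairs a k f :
  sumR (2 * a + 1) (2 * k) f = sumR (a + 1) k (fun j => f (2 * j - 1)%nat + f (2 * j)%nat).
Proof.
  revert a; induction k as [|k IH]; intros a; [reflexivity|].
  replace (2 * S k)%nat with (S (S (2 * k))) by lia.
  rewrite !sumR_cons.
  replace (S (S (2 * a + 1))) with (2 * (a + 1) + 1)%nat by lia.
  replace (S (a + 1)) with (a + 1 + 1)%nat by lia.
  rewrite IH.
  replace (2 * (a + 1) - 1)%nat with (2 * a + 1)%nat by lia.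
  replace (2 * (a + 1))%nat with (S (2 * a + 1)) by lia.
  ring.
Qed.

Lemma is_derive_sumR a k (F : nat -> R -> R) (dF : nat -> R) y :
  (forall i, (a <= i < a + k)%nat -> is_derive (F i) y (dF i)) ->
  is_derive (fun t => sumR a k (fun i => F i t)) y (sumR a k dF).
Proof.
  revert a; induction k as [|k IH]; intros a HF.
  - apply (is_derive_const (K := R_AbsRing) 0 y).
  - apply (is_derive_plus (F a) (fun t => sumR (S a) k (fun i => F i t))).
    + apply HF; lia.
    + apply IH; intros; apply HF; lia.
Qed.

Lemma eps_pm1 r j i : eps r j i = 1%Z \/ eps r j i = (-1)%Z.
Proof. unfold eps; destruct Nat.testbit; auto. Qed.

Lemma mseq_0 n r j : mseq n r j 0 = Z.of_nat n.
Proof. unfold mseq; simpl; lia. Qed.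

Lemma fold_right_Zadd_snoc l x :
  fold_right Z.add 0%Z (l ++ x :: nil) = (fold_right Z.add 0%Z l + x)%Z.
Proof. induction l; simpl; lia. Qed.

Lemma mseq_S n r j i : mseq n r j (S i) = (mseq n r j i + eps r j (S i))%Z.
Proof.
  unfold mseq; rewrite seq_S, map_app; simpl map at 2; rewrite fold_right_Zadd_snoc.
  replace (1 + i)%nat with (S i) by lia; lia.
Qed.

Lemma mseq_bounds n r j i :
  (Z.of_nat n - Z.of_nat i <= mseq n r j i <= Z.of_nat n + Z.of_nat i)%Z.
Proof.
  induction i as [|i IH]; [rewrite mseq_0; lia|].
  rewrite mseq_S; destruct (eps_pm1 r j (S i)) as [E|E]; rewrite E; lia.
Qed.

Lemma IZR_mseq_bounds n r j i :
  INR n - INR i <= IZR (mseq n r j i) <= INR n + INR i.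
Proof.
  destruct (mseq_bounds n r j i) as [Hlo Hhi].
  apply IZR_le in Hlo, Hhi.
  rewrite minus_IZR, <- !INR_IZR_INZ in Hlo.
  rewrite plus_IZR, <- !INR_IZR_INZ in Hhi.
  lra.
Qed.

Lemma mseq_ext n r j r' j' i :
  (forall l, (1 <= l <= i)%nat -> eps r j l = eps r' j' l) ->
  mseq n r j i = mseq n r' j' i.
Proof.
  induction i as [|i IH]; intros Heps; [rewrite !mseq_0; reflexivity|].
  rewrite !mseq_S, IH, (Heps (S i)) by (lia || (intros; apply Heps; lia)).
  reflexivity.
Qed.

Lemma mseq_const n r j i e :
  (forall l, (1 <= l <= i)%nat -> eps r j l = e) ->
  mseq n r j i = (Z.of_nat n + Z.of_nat i * e)%Z.
Proof.
  induction i as [|i IH]; intros Heps; [rewrite mseq_0; lia|].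
  rewrite mseq_S, IH, (Heps (S i)) by (lia || (intros; apply Heps; lia)).
  lia.
Qed.

(* The relation between [j] and [j'] says that the sign vector number [j] of length
   [k+1] is the sign vector number [j'] of length [k] followed by the sign [b]. *)
Section SignVectorSucc.
Variables (k j j' : nat) (b : bool).
Hypothesis Hj : (j - 1 = 2 * (j' - 1) + Nat.b2n b)%nat.

Lemma eps_succ_prefix l : (1 <= l <= k)%nat -> eps (S k) j l = eps k j' l.
Proof.
  intros Hl; unfold eps; rewrite Hj.
  replace (S k - l)%nat with (S (k - l)) by lia.
  now rewrite Nat.testbit_succ_r.
Qed.

Lemma eps_succ_last : eps (S k) j (S k) = if b then 1%Z else (-1)%Z.
Proof. unfold eps; rewrite Hj, Nat.sub_diag, Nat.testbit_0_r; reflexivity. Qed.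

Lemma mseq_succ_prefix n i : (i <= k)%nat -> mseq n (S k) j i = mseq n k j' i.
Proof. intros Hi; apply mseq_ext; intros l Hl; apply eps_succ_prefix; lia. Qed.

Lemma mseq_succ_last n :
  mseq n (S k) j (S k) = (mseq n k j' k + if b then 1 else -1)%Z.
Proof. rewrite mseq_S, mseq_succ_prefix, eps_succ_last by lia; reflexivity. Qed.

Lemma sgnprod_succ : sgnprod (S k) j = sgnprod k j' * IZR (if b then 1 else -1)%Z.
Proof.
  unfold sgnprod; rewrite prodR_snoc.
  replace (1 + k)%nat with (S k) by lia.
  rewrite eps_succ_last; f_equal.
  apply prodR_ext; intros i Hi; rewrite eps_succ_prefix by lia; reflexivity.
Qed.

Lemma beta_succ n : beta n (S k) j = beta n k j' * (2 * IZR (mseq n k j' k)).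
Proof.
  unfold beta; rewrite prodR_snoc.
  replace (1 + k - 1)%nat with k by lia.
  rewrite mseq_succ_prefix by lia; f_equal.
  apply prodR_ext; intros i Hi; rewrite mseq_succ_prefix by lia; reflexivity.
Qed.

End SignVectorSucc.

Definition branch (g : Z -> R -> R) (M : Z) (x : R) : R :=
  (g (M + 1)%Z x - g (M - 1)%Z x) / (2 * IZR M).

Definition signedSum (n k : nat) (g : Z -> R -> R) (x : R) : R :=
  sumR 1 (2 ^ k) (fun j => sgnprod k j * g (mseq n k j k) x / beta n k j).

Lemma signedSum_succ n k g x : signedSum n (S k) g x = signedSum n k (branch g) x.
Proof.
  unfold signedSum; rewrite Nat.pow_succ_r'.
  change 1%nat with (2 * 0 + 1)%nat at 1; rewrite sumR_pairs.
  apply sumR_ext; intros j' Hj'.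
  assert (Hodd : (2 * j' - 1 - 1 = 2 * (j' - 1) + Nat.b2n false)%nat) by (simpl; lia).
  assert (Heven : (2 * j' - 1 = 2 * (j' - 1) + Nat.b2n true)%nat) by (simpl; lia).
  rewrite (sgnprod_succ _ _ _ _ Hodd), (sgnprod_succ _ _ _ _ Heven),
    (beta_succ _ _ _ _ Hodd), (beta_succ _ _ _ _ Heven),
    (mseq_succ_last _ _ _ _ Hodd), (mseq_succ_last _ _ _ _ Heven).
  unfold branch; replace (mseq n k j' k + -1)%Z with (mseq n k j' k - 1)%Z by lia.
  unfold Rdiv; rewrite !Rinv_mult; simpl IZR; ring.
Qed.

Lemma is_derive_signedSum n k g g' y :
  (forall j, is_derive (g (mseq n k j k)) y (g' (mseq n k j k) y)) ->
  is_derive (signedSum n k g) y (signedSum n k g' y).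
Proof.
  intros Hg; unfold signedSum.
  apply (is_derive_sumR 1 (2 ^ k)
           (fun j t => sgnprod k j * g (mseq n k j k) t / beta n k j)).
  intros j _.
  apply (is_derive_ext (fun t => sgnprod k j / beta n k j * g (mseq n k j k) t)).
  - intros t; cbn -[sgnprod beta mseq]; unfold Rdiv; ring.
  - replace (sgnprod k j * g' (mseq n k j k) y / beta n k j)
      with (sgnprod k j / beta n k j * g' (mseq n k j k) y) by (unfold Rdiv; ring).
    apply is_derive_scal, Hg.
Qed.

Lemma sqrt_1_minus_sq_pos y : -1 < y < 1 -> 0 < sqrt (1 - y ^ 2).
Proof. intros Hy; apply sqrt_lt_R0; nra. Qed.

Lemma is_derive_acos y : -1 < y < 1 -> is_derive acos y (- / sqrt (1 - y ^ 2)).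
Proof.
  intros Hy; apply is_derive_Reals.
  apply (derive_pt_eq_1 _ _ _ (derivable_pt_acos y Hy)).
  rewrite derive_pt_acos; unfold Rsqr, Rdiv.
  replace (1 - y * y) with (1 - y ^ 2) by ring; ring.
Qed.

Lemma is_derive_cos_mul_acos a y : -1 < y < 1 ->
  is_derive (fun t => cos (a * acos t)) y (a * sin (a * acos y) / sqrt (1 - y ^ 2)).
Proof.
  intros Hy.
  assert (Hd := is_derive_comp cos (fun t => a * acos t) y _ _
                  (proj2 (is_derive_Reals _ _ _) (derivable_pt_lim_cos (a * acos y)))
                  (is_derive_scal _ _ a _ (is_derive_acos y Hy))).
  replace (a * sin (a * acos y) / sqrt (1 - y ^ 2))
    with (a * - / sqrt (1 - y ^ 2) * - sin (a * acos y))
    by (unfold Rdiv; ring).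
  exact Hd.
Qed.

Lemma is_derive_sin_mul_acos a y : -1 < y < 1 ->
  is_derive (fun t => sin (a * acos t)) y (- a * cos (a * acos y) / sqrt (1 - y ^ 2)).
Proof.
  intros Hy.
  assert (Hd := is_derive_comp sin (fun t => a * acos t) y _ _
                  (proj2 (is_derive_Reals _ _ _) (derivable_pt_lim_sin (a * acos y)))
                  (is_derive_scal _ _ a _ (is_derive_acos y Hy))).
  replace (- a * cos (a * acos y) / sqrt (1 - y ^ 2))
    with (a * - / sqrt (1 - y ^ 2) * cos (a * acos y))
    by (unfold Rdiv; ring).
  exact Hd.
Qed.

Lemma calT_sin_acos p y : (1 <= p)%nat -> -1 < y < 1 ->
  calT p y = sin (INR p * acos y) / INR p.
Proof.
  intros Hp Hy; unfold calT.
  rewrite (is_derive_unique (chebT p) y _ (is_derive_cos_mul_acos (INR p) y Hy)).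
  assert (0 < INR p) by (apply lt_0_INR; lia).
  assert (0 < sqrt (1 - y ^ 2)) by (apply sqrt_1_minus_sq_pos; exact Hy).
  field; lra.
Qed.

Lemma locally_open_unit_interval y : -1 < y < 1 -> locally y (fun t => -1 < t < 1).
Proof.
  intros Hy; apply (open_and (fun t => -1 < t) (fun t => t < 1)).
  - apply open_gt.
  - apply open_lt.
  - exact Hy.
Qed.

Lemma is_derive_calT_branch M y : (2 <= M)%nat -> -1 < y < 1 ->
  is_derive (fun t => (calT (S M) t - calT (M - 1) t) / (2 * INR M)) y (calT M y).
Proof.
  intros HM Hy.
  assert (HM2 : INR 2 <= INR M) by (apply le_INR; exact HM); simpl in HM2.
  assert (HSM : INR (S M) = INR M + 1) by apply S_INR.
  assert (HpM : INR (M - 1) = INR M - 1) by (rewrite minus_INR by lia; reflexivity).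
  assert (Hs := sqrt_1_minus_sq_pos y Hy).
  assert (Hd := is_derive_scal _ _ (/ (2 * INR M)) _
    (is_derive_minus _ _ _ _ _
      (is_derive_scal _ _ (/ INR (S M)) _ (is_derive_sin_mul_acos (INR (S M)) y Hy))
      (is_derive_scal _ _ (/ INR (M - 1)) _ (is_derive_sin_mul_acos (INR (M - 1)) y Hy)))).
  replace (calT M y) with
    (/ (2 * INR M) *
     (/ INR (S M) * (- INR (S M) * cos (INR (S M) * acos y) / sqrt (1 - y ^ 2)) -
      / INR (M - 1) * (- INR (M - 1) * cos (INR (M - 1) * acos y) / sqrt (1 - y ^ 2)))).
  - eapply is_derive_ext_loc; [|exact Hd].
    generalize (locally_open_unit_interval y Hy); apply filter_imp; intros t Ht.
    cbn -[calT INR]; rewrite !calT_sin_acos by (lia || exact Ht).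
    unfold Rdiv; ring.
  - rewrite calT_sin_acos by (lia || exact Hy).
    rewrite HSM, HpM.
    replace ((INR M + 1) * acos y) with (INR M * acos y + acos y) by ring.
    replace ((INR M - 1) * acos y) with (INR M * acos y - acos y) by ring.
    rewrite cos_plus, cos_minus, sin_acos by lra.
    replace (1 - y²) with (1 - y ^ 2) by (unfold Rsqr; ring).
    field; repeat split; lra.
Qed.

Definition calTZ (M : Z) : R -> R := calT (Z.to_nat M).

Lemma is_derive_branch_calTZ M y : (2 <= M)%Z -> -1 < y < 1 ->
  is_derive (branch calTZ M) y (calTZ M y).
Proof.
  intros HM Hy.
  apply (is_derive_ext
           (fun t => (calT (S (Z.to_nat M)) t - calT (Z.to_nat M - 1) t) / (2 * INR (Z.to_nat M)))).
  - intros t; unfold branch, calTZ.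
    rewrite INR_IZR_INZ, Z2Nat.id by lia.
    replace (Z.to_nat (M + 1)) with (S (Z.to_nat M)) by lia.
    replace (Z.to_nat (M - 1)) with (Z.to_nat M - 1)%nat by lia.
    reflexivity.
  - apply is_derive_calT_branch; [lia | exact Hy].
Qed.

Lemma Derive_betaSum_succ n k x : (k + 2 <= n)%nat -> -1 < x < 1 ->
  Derive (betaSum n (S k)) x = betaSum n k x.
Proof.
  intros Hk Hx; apply is_derive_unique.
  apply (is_derive_ext (signedSum n k (branch calTZ))).
  - intros t; symmetry; exact (signedSum_succ n k calTZ t).
  - apply (is_derive_signedSum n k (branch calTZ) calTZ); intros j.
    apply is_derive_branch_calTZ; [|exact Hx].
    destruct (mseq_bounds n k j k); lia.
Qed.

Lemma Derive_n_betaSum n k x : (k + 1 <= n)%nat -> -1 < x < 1 ->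
  Derive_n (betaSum n k) k x = calT n x.
Proof.
  revert x; induction k as [|k IH]; intros x Hk Hx.
  - unfold betaSum, sumR, sgnprod, beta, prodR, mseq; simpl.
    rewrite Z.add_0_r, Nat2Z.id; field.
  - rewrite <- (IH x) by (lia || exact Hx).
    rewrite <- Nat.add_1_r, <- Derive_n_comp.
    apply Derive_n_ext_loc.
    generalize (locally_open_unit_interval x Hx); apply filter_imp; intros t Ht.
    rewrite Nat.add_1_r; apply Derive_betaSum_succ; [lia | exact Ht].
Qed.

Lemma beta_odd_even n r j : (1 <= j)%nat -> beta n r (2 * j - 1) = beta n r (2 * j).
Proof.
  intros Hj; unfold beta; apply prodR_ext; intros i Hi.
  do 2 f_equal; apply mseq_ext; intros l Hl; unfold eps.
  replace (2 * j - 1 - 1)%nat with (2 * (j - 1))%nat by lia.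
  replace (2 * j - 1)%nat with (2 * (j - 1) + 1)%nat by lia.
  replace (r - l)%nat with (S (r - l - 1)) by lia.
  rewrite Nat.testbit_even_succ, Nat.testbit_odd_succ by lia; reflexivity.
Qed.

Lemma IZR_of_nat_affine n i e : (1 <= i)%nat ->
  IZR (Z.of_nat n + Z.of_nat (i - 1) * e) = INR n + (INR i - 1) * IZR e.
Proof.
  intros Hi; rewrite plus_IZR, mult_IZR, <- !INR_IZR_INZ, minus_INR by lia.
  reflexivity.
Qed.

Lemma beta_2_eq n r : beta n r 2 = prodR 1 r (fun i => 2 * INR n - 2 * INR i + 2).
Proof.
  unfold beta; apply prodR_ext; intros i Hi.
  rewrite (mseq_const n r 2 (i - 1) (-1)).
  - rewrite IZR_of_nat_affine by lia; simpl IZR; ring.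
  - intros l Hl; unfold eps; simpl (2 - 1)%nat.
    replace (r - l)%nat with (S (r - l - 1)) by lia.
    rewrite (Nat.testbit_odd_succ 0), Nat.bits_0 by lia; reflexivity.
Qed.

Lemma beta_pow2_eq n r : beta n r (2 ^ r) = prodR 1 r (fun i => 2 * INR n + 2 * INR i - 2).
Proof.
  unfold beta; apply prodR_ext; intros i Hi.
  rewrite (mseq_const n r (2 ^ r) (i - 1) 1).
  - rewrite IZR_of_nat_affine by lia; simpl IZR; ring.
  - intros l Hl; unfold eps.
    replace (2 ^ r - 1)%nat with (Nat.ones r) by (rewrite Nat.ones_equiv; lia).
    rewrite Nat.ones_spec_low by lia; reflexivity.
Qed.

Lemma beta_2_le n r j : (r + 1 <= n)%nat -> beta n r 2 <= beta n r j.
Proof.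
  intros Hr; rewrite beta_2_eq; unfold beta; apply prodR_le; intros i Hi.
  destruct (IZR_mseq_bounds n r j (i - 1)) as [Hlo _].
  rewrite minus_INR in Hlo by lia; change (INR 1) with 1 in Hlo.
  assert (INR i + 1 <= INR n) by (rewrite <- S_INR; apply le_INR; lia).
  lra.
Qed.

Lemma beta_le_pow2 n r j : (r + 1 <= n)%nat -> beta n r j <= beta n r (2 ^ r).
Proof.
  intros Hr; rewrite beta_pow2_eq; unfold beta; apply prodR_le; intros i Hi.
  destruct (IZR_mseq_bounds n r j (i - 1)) as [Hlo Hhi].
  rewrite minus_INR in Hlo, Hhi by lia; change (INR 1) with 1 in Hlo, Hhi.
  assert (INR i + 1 <= INR n) by (rewrite <- S_INR; apply le_INR; lia).
  lra.
Qed.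

Theorem lemma1 (n r : nat) (hn : (2 <= n)%nat) (hr1 : (1 <= r)%nat)
  (hr2 : (r <= n - 1)%nat) :
  (forall x : R, -1 < x < 1 -> calT n x = Derive_n (betaSum n r) r x) /\
  (beta n r 1 = beta n r 2 /\
   beta n r 2 = prodR 1 r (fun i => 2 * INR n - 2 * INR i + 2)) /\
  (beta n r (2 ^ r - 1) = beta n r (2 ^ r) /\
   beta n r (2 ^ r) = prodR 1 r (fun i => 2 * INR n + 2 * INR i - 2)) /\
  (forall j : nat, (1 <= j <= 2 ^ (r - 1))%nat ->
     beta n r 1 = beta n r 2 /\
     beta n r 2 <= beta n r (2 * j - 1) /\
     beta n r (2 * j - 1) = beta n r (2 * j) /\
     beta n r (2 * j) <= beta n r (2 ^ r - 1) /\
     beta n r (2 ^ r - 1) = beta n r (2 ^ r)).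
Proof.
  assert (Hfirst : beta n r 1 = beta n r 2) by exact (beta_odd_even n r 1 (le_n 1)).
  assert (Hpow : (2 ^ r = 2 * 2 ^ (r - 1))%nat).
  { replace r with (S (r - 1)) at 1 by lia; apply Nat.pow_succ_r'. }
  assert (Hlast : beta n r (2 ^ r - 1) = beta n r (2 ^ r)).
  { rewrite Hpow; apply beta_odd_even.
    assert (2 ^ (r - 1) <> 0)%nat by (apply Nat.pow_nonzero; lia); lia. }
  split; [|split; [|split]].
  - intros x Hx; symmetry; apply Derive_n_betaSum; [lia | exact Hx].
  - split; [exact Hfirst | apply beta_2_eq].
  - split; [exact Hlast | apply beta_pow2_eq].
  - intros j Hj; repeat split; try assumption.
    + apply beta_2_le; lia.
    + apply beta_odd_even; lia.
    + rewrite Hlast; apply beta_le_pow2; lia.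
Qed.
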